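(* Let $M$ be an embedded causal generative model, $\ell$ a layer of $M$, and $\mathcal{E}\subseteq\ell$ a subset of nodes such that $\mathcal{E}$ and $\ell\setminus\mathcal{E}$ have no common latent ancestor. Then for any endomorphism $T^{\mathcal{E}}:\bm{\mathcal{V}}^{\mathcal{E}}_M\to\bm{\mathcal{V}}^{\mathcal{E}}_M$, defining $T':\bm{\mathcal{V}}^{\ell\setminus\mathcal{E}}_M\times\bm{\mathcal{V}}^{\mathcal{E}}_M\to\bm{\mathcal{V}}^{\ell\setminus\mathcal{E}}_M\times\bm{\mathcal{V}}^{\mathcal{E}}_M$ by $(\tilde{\bm v},\bm v)\mapsto(\tilde{\bm v},T^{\mathcal{E}}(\bm v))$, the transformation $T:y\mapsto\tilde g^\ell_M\circ T'\circ(\tilde g^\ell_M)^{-1}(y)$ is (intrinsically) disentangled with respect to $\mathcal{E}$ in $M$.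
   Context: A causal generative model (CGM) $M$ consists of $K$ real-valued latent variables $\bm z=(z_k)$ with values in $\mathcal{Z}=\prod_k\mathcal{Z}_k$ (closed intervals), a DAG $\mathcal{G}$, and deterministic continuous structural equations assigning endogenous variables $V_k:=f_k(\mathbf{Pa}_k)$ with values in Euclidean spaces $\mathcal{V}^k$ (parents latent or endogenous) and an output $Y:=f_y(\mathbf{Pa}_y)$ (Euclidean-valued, endogenous parents); the sources of $\mathcal{G}$ are exactly the latent variables and $Y$ is the unique sink. A node $A$ is an ancestor of $B$ if there is a directed path from $A$ to $B$ in $\mathcal{G}$; a latent ancestor is an ancestor that is a latent variable. A layer $\ell$ is a minimal set of endogenous variables meeting every directed path from a latent node to $Y$; for any tuple $\bm v\in\prod_{k\in\ell}\mathcal{V}^k$, $Y(\bm v)$ denotes the output obtained by assigning these values to layer $\ell$ and computing downstream. $\mathcal{Y}_M=\{Y(\bm z):\bm z\in\mathcal{Z}\}$; for a set $\mathcal{F}$ of endogenous variables, $\bm{\mathcal{V}}^{\mathcal{F}}_M$ is the set of value tuples taken by the variables in $\mathcal{F}$ as $\bm z$ ranges over $\mathcal{Z}$; $g_M:\mathcal{Z}\to\mathcal{Y}_M$, $\bm z\mapsto Y(\bm z)$; $\tilde g^\ell_M:\bm{\mathcal{V}}^\ell_M\to\mathcal{Y}_M$, $\bm v\mapsto Y(\bm v)$. An embedding is a continuous injection with continuous inverse on its image; $M$ is embedded if $g_M$ and all $\tilde g^\ell_M$ are embeddings into the output space. An endomorphism of a set $A$ is a continuous map $A\to A$. An endomorphism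 $T:\mathcal{Y}_M\to\mathcal{Y}_M$ is intrinsically disentangled with respect to a subset $\mathcal{E}$ of endogenous variables in layer $\ell$ if there is a transformation $T'$ of the layer-$\ell$ values changing only the components indexed by $\mathcal{E}$ such that, for every $\bm z\in\mathcal{Z}$ with corresponding layer-$\ell$ values $\bm v$, $T(Y(\bm v))=Y(T'(\bm v))$. *)

From HB Require Import structures.
From mathcomp Require Import all_boot all_order all_algebra.
From mathcomp Require Import all_classical all_reals all_analysis.

Set Implicit Arguments.
Unset Strict Implicit.
Unset Printing Implicit Defensive.

Import Order.TTheory GRing.Theory Num.Theory.
Import numFieldNormedType.Exports.
Local Open Scope classical_set_scope.
Local Open Scope ring_scope.

(** Latent variables are indexed by ['I_K], endogenous variables (other than
  the output) by ['I_N], listed in a topological order of the DAG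
  (an endogenous parent [j] of [k] satisfies [j < k]); the output [Y] is a
  separate node. *)

Record CGM (R : realType) := MkCGM {
  K : nat;
  N : nat;
  dim : 'I_N -> nat;
  dy : nat;
  (* Z_i = [lo i, hi i] (closed intervals) *)
  lo : 'I_K -> R;
  hi : 'I_K -> R;
  lo_le_hi : forall i, lo i <= hi i;
  lpar : 'I_N -> pred 'I_K;
  epar : 'I_N -> pred 'I_N;
  epar_lt : forall k j, epar k j -> (j < k)%N;
  ypar : pred 'I_N;
  feq : forall k : 'I_N,
      'rV[R]_K ->
      prod_topology (fun j : 'I_N => Topological.clone 'rV[R]_(dim j) _) -> 'rV[R]_(dim k);
  fy : prod_topology (fun j : 'I_N => Topological.clone 'rV[R]_(dim j) _) -> 'rV[R]_dy;
  feq_local : forall k (z z' : 'rV[R]_K)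
      (v v' : prod_topology (fun j : 'I_N => Topological.clone 'rV[R]_(dim j) _)),
      (forall i, lpar k i -> z ord0 i = z' ord0 i) ->
      (forall j, epar k j -> v j = v' j) -> feq k z v = feq k z' v';
  fy_local : forall v v' : prod_topology (fun j : 'I_N => Topological.clone 'rV[R]_(dim j) _),
      (forall j, ypar j -> v j = v' j) -> fy v = fy v';
  feq_cont : forall k, continuous (fun p : 'rV[R]_K *
                                        prod_topology (fun j : 'I_N => Topological.clone 'rV[R]_(dim j) _)
                                   => feq k p.1 p.2);
  fy_cont : continuous fy;
  (* the sources of G are exactly the latent variables *)
  endo_not_source : forall k, (exists i, lpar k i) \/ (exists j, epar k j);
  y_not_source : exists j, ypar j;
  (* Y is the unique sink *)
  latent_not_sink : forall i, exists k, lpar k i;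
  endo_not_sink : forall j, ypar j \/ exists k, epar k j
}.

Section CGMDefs.
Variables (R : realType) (M : CGM R).

Definition lats := 'rV[R]_(K M).
Definition vals := prod_topology (fun j : 'I_(N M) => Topological.clone 'rV[R]_(dim j) _).

Definition Zset : set lats := [set z | forall i, lo i <= z ord0 i <= hi i].

Inductive node := Lat of 'I_(K M) | End of 'I_(N M) | Out.

Definition edge (a b : node) : bool :=
  match a, b with
  | Lat i, End k => lpar k i
  | End j, End k => epar k j
  | End j, Out => ypar j
  | _, _ => false
  end.

Definition ancestor (a b : node) : Prop :=
  exists s : seq node, s <> [::] /\ path edge a s /\ last a s = b.

Definition cuts (S : {set 'I_(N M)}) : Prop :=
  forall (i : 'I_(K M)) (s : seq node), path edge (Lat i) s -> last (Lat i) s = Out ->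
    exists k, k \in S /\ has (fun x => if x is End k' then k' == k else false) s.

Definition layer (l : {set 'I_(N M)}) : Prop :=
  cuts l /\ forall S : {set 'I_(N M)}, S \proper l -> ~ cuts S.

Definition no_common_latent_ancestor (A B : {set 'I_(N M)}) : Prop :=
  ~ exists i : 'I_(K M),
      (exists2 k, k \in A & ancestor (Lat i) (End k)) /\
      (exists2 k, k \in B & ancestor (Lat i) (End k)).

(** values of all endogenous variables given the latents, computed along the
    topological order ([N] rounds suffice) *)
Definition state (z : lats) : vals :=
  iter (N M) (fun (v : vals) (k : 'I_(N M)) => feq k z v) (fun k => 0).

Definition state_do (S : {set 'I_(N M)}) (w : vals) (z : lats) : vals :=
  iter (N M) (fun (v : vals) (k : 'I_(N M)) => if k \in S then w k else feq k z v)
       (fun k => 0).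

(** tuples of values indexed by a set [S] of endogenous variables are encoded
    as assignments that vanish outside [S] *)
Definition restrict (S : {set 'I_(N M)}) (v : vals) : vals :=
  fun k => if k \in S then v k else 0.

Definition glue (S : {set 'I_(N M)}) (v w : vals) : vals :=
  fun k => if k \in S then w k else v k.

Definition gM (z : lats) : 'rV[R]_(dy M) := fy (state z).

(** Y(v) for a tuple v of values of the layer l; the latents are irrelevant
    when l is a layer, we use the point lo of Z. *)
Definition Ylay (l : {set 'I_(N M)}) (w : vals) : 'rV[R]_(dy M) :=
  fy (state_do l w (\row_i lo i)).

Definition Yset : set 'rV[R]_(dy M) := gM @` Zset.

Definition Vset (F : {set 'I_(N M)}) : set vals :=
  [set restrict F (state z) | z in Zset].

Definition lay (l : {set 'I_(N M)}) (z : lats) : vals := restrict l (state z).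

End CGMDefs.

Arguments Zset {R} M.
Arguments Yset {R} M.
Arguments vals {R} M.
Arguments lats {R} M.

Definition embedding_on {T U : topologicalType} (A : set T) (f : T -> U) : Prop :=
  [/\ (forall x y, A x -> A y -> f x = f y -> x = y),
      {within A, continuous f} &
      exists g : U -> T, (forall x, A x -> g (f x) = x) /\
                         {within f @` A, continuous g}].

Definition embedded (R : realType) (M : CGM R) : Prop :=
  embedding_on (Zset M) (@gM R M) /\
  forall l : {set 'I_(N M)}, layer l ->
    embedding_on (Vset l) (Ylay l).

Definition endomorphism {T : topologicalType} (A : set T) (f : T -> T) : Prop :=
  (forall x, A x -> A (f x)) /\ {within A, continuous f}.

Definition intrinsically_disentangled (R : realType) (M : CGM R)
    (l E : {set 'I_(N M)}) (T : 'rV[R]_(dy M) -> 'rV[R]_(dy M)) : Prop :=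
  endomorphism (Yset M) T /\
  exists T' : vals M -> vals M,
    (forall w k, k \notin E -> T' w k = w k) /\
    (forall z, Zset M z -> T (Ylay l (lay l z)) = Ylay l (T' (lay l z))).

(** T' : (v~, v) |-> (v~, T^E v) *)
Definition Tprime (R : realType) (M : CGM R) (E : {set 'I_(N M)})
    (TE : vals M -> vals M) (w : vals M) : vals M :=
  glue E w (TE (restrict E w)).

From HB Require Import structures.
From mathcomp Require Import all_boot all_order all_algebra.
From mathcomp Require Import all_classical all_reals all_analysis.
From mathcomp Require Import zify.

Set Implicit Arguments.
Unset Strict Implicit.
Unset Printing Implicit Defensive.
Import Order.TTheory GRing.Theory Num.Theory.
Local Open Scope classical_set_scope.
Local Open Scope ring_scope.

(** Since [E] and [l \ E] have no common latent ancestor, the values of the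
    layer on [E] and on [l \ E] are computed from disjoint sets of latents.
    Hence any layer value on [E] can be combined with any layer value on
    [l \ E] by mixing two latent vectors, so [T'] maps the layer values
    [V^l_M] into themselves.  As [Y] restricted to [V^l_M] is an embedding
    onto [Y_M], the conjugate [T = Y o T' o Y^-1] is a continuous
    endomorphism of [Y_M], and it satisfies the disentanglement identity by
    construction. *)

Lemma continuous_within_comp {T U W : topologicalType} (A : set T) (B : set U)
    (f : T -> U) (g : U -> W) :
  (forall x, A x -> B (f x)) -> {within A, continuous f} ->
  {within B, continuous g} -> {within A, continuous (g \o f)}.
Proof.
move=> fAB /subspace_continuousP cf /subspace_continuousP cg.
apply/subspace_continuousP => x Ax; apply: cvg_trans (cg _ (fAB _ Ax)).
move=> P /(cf x Ax); rewrite !nbhs_simpl /within /=.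
by apply: filterS => t Pft At; exact: Pft (fAB _ At).
Qed.

Lemma cvg_prod_topology (I : Type) (T : I -> topologicalType)
    (F : set_system (prod_topology T)) (f : prod_topology T) :
  Filter F -> (forall i, (fun g => g i) @ F --> f i) -> F --> f.
Proof.
move=> FF Fi; apply/cvg_sup => i A /= [B [[C oC <-] Cf BA]].
by rewrite nbhs_simpl; apply: filterS BA _; apply: (Fi i C); exact: open_nbhs_nbhs.
Qed.

Lemma within_continuous_prod (I : Type) (T : I -> topologicalType)
    (U : topologicalType) (A : set U) (h : U -> prod_topology T) :
  (forall i, {within A, continuous (fun t => h t i)}) -> {within A, continuous h}.
Proof.
move=> hi; apply/subspace_continuousP => x Ax; apply: cvg_prod_topology => i.
by have /subspace_continuousP := hi i; apply.
Qed.

Lemma embedding_on_sectionK {T U : topologicalType} (A : set T) (f : T -> U)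
    (h : U -> T) :
  embedding_on A f -> (forall y, (f @` A) y -> A (h y) /\ f (h y) = y) ->
  forall x, A x -> h (f x) = x.
Proof.
move=> [f_inj _ _] hP x Ax; have [Ahfx fhfx] := hP _ (imageP f Ax).
exact: f_inj.
Qed.

Lemma embedding_on_section_continuous {T U : topologicalType} (A : set T)
    (f : T -> U) (h : U -> T) :
  embedding_on A f -> (forall y, (f @` A) y -> A (h y) /\ f (h y) = y) ->
  {within f @` A, continuous h}.
Proof.
move=> fA hP; have [_ _ [g [gK gc]]] := fA.
apply: (subspace_eq_continuous _ gc) => _ /set_mem [x Ax <-].
by rewrite /from_subspace gK // (embedding_on_sectionK fA hP).
Qed.

Section TriangularIteration.
Variables (n : nat) (T : 'I_n -> Type) (G : (forall k, T k) -> forall k, T k).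

Hypothesis G_triangular : forall (v v' : forall k, T k) (k : 'I_n),
  (forall j : 'I_n, (j < k)%N -> v j = v' j) -> G v k = G v' k.

Lemma iter_triangular_stable (x0 : forall k, T k) m p : (m <= p)%N ->
  forall k : 'I_n, (k < m)%N -> iter p G x0 k = iter m G x0 k.
Proof.
elim: m p => [|m IH] [|p] //= mp k km.
by apply: G_triangular => j jk; apply: IH; lia.
Qed.

Lemma iter_triangular_fixpoint (x0 : forall k, T k) (k : 'I_n) :
  iter n G x0 k = G (iter n G x0) k.
Proof.
by rewrite -[RHS]/(iter n.+1 G x0 k) (iter_triangular_stable _ (leqnSn n)).
Qed.

End TriangularIteration.

Section CGMTheory.
Variables (R : realType) (M : CGM R).
Implicit Types (z : lats M) (v w : vals M) (S l E : {set 'I_(N M)}).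

Lemma state_fixpoint z k : state z k = feq k z (state z).
Proof.
apply: (iter_triangular_fixpoint (G := fun v k => feq k z v)) => v v' k' vv'.
by apply: feq_local => // j /epar_lt; exact: vv'.
Qed.

Lemma state_do_fixpoint S w z k :
  state_do S w z k = if k \in S then w k else feq k z (state_do S w z).
Proof.
apply: (iter_triangular_fixpoint (G := fun v k => if k \in S then w k else feq k z v)).
move=> v v' k' vv'; case: ifP => // _.
by apply: feq_local => // j /epar_lt; exact: vv'.
Qed.

Lemma ancestor_lpar i k : lpar k i -> ancestor (Lat i) (@End R M k).
Proof. by move=> ik; exists [:: End k]; rewrite /= ik. Qed.

Lemma ancestor_epar (a : node M) j k :
  ancestor a (End j) -> epar k j -> ancestor a (End k).
Proof.
move=> [s [s_nil [a_s s_last]]] jk; exists (rcons s (End k)).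
by rewrite rcons_path a_s s_last last_rcons /=; case: s {s_nil a_s s_last}.
Qed.

Lemma state_latent_ancestors z z' k :
  (forall i, ancestor (Lat i) (End k) -> z ord0 i = z' ord0 i) ->
  state z k = state z' k.
Proof.
suff : forall m (k : 'I_(N M)), (k < m)%N ->
    (forall i, ancestor (Lat i) (End k) -> z ord0 i = z' ord0 i) ->
    state z k = state z' k by apply.
elim=> [//|m IH] {}k km zz'; rewrite !state_fixpoint; apply: feq_local.
  by move=> i /ancestor_lpar; exact: zz'.
move=> j jk; apply: IH; first by have := epar_lt jk; lia.
by move=> i /ancestor_epar /(_ jk); exact: zz'.
Qed.

Definition endo_in S (x : node M) : bool := if x is End k then k \in S else false.

Definition screened S (b : node M) : Prop :=
  forall i s, path (@edge R M) (Lat i) s -> last (Lat i) s = b -> has (endo_in S) s.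

Lemma cuts_screened_ypar S j : cuts S -> ypar j -> screened S (End j).
Proof.
move=> cS jY i s i_s s_last.
have i_s_Out : path (@edge R M) (Lat i) (rcons s (Out M)).
  by rewrite rcons_path i_s s_last.
have [k [kS]] := cS i _ i_s_Out (last_rcons _ _ _).
rewrite has_rcons /=; apply: sub_has => -[//|k'|//] /= /eqP ->; exact: kS.
Qed.

Lemma state_do_restrict_state S z z0 k : screened S (End k) ->
  state_do S (restrict S (state z)) z0 k = state z k.
Proof.
suff : forall m (k : 'I_(N M)), (k < m)%N -> screened S (End k) ->
    state_do S (restrict S (state z)) z0 k = state z k by apply.
elim=> [//|m IH] {}k km kS.
rewrite state_do_fixpoint [RHS]state_fixpoint /restrict.
case: ifP => kSb; first by rewrite kSb state_fixpoint.
apply: feq_local => [i ik|j jk].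
  by have := kS i [:: End k]; rewrite /= ik kSb => /(_ isT erefl).
apply: IH => [|i s i_s s_last]; first by have := epar_lt jk; lia.
have := kS i (rcons s (End k)).
by rewrite rcons_path i_s s_last last_rcons /= jk has_rcons /= kSb; apply.
Qed.

Lemma Ylay_lay l z : cuts l -> Ylay l (lay l z) = gM z.
Proof.
move=> cl; apply: fy_local => j jY.
exact/state_do_restrict_state/cuts_screened_ypar.
Qed.

Lemma image_Ylay_Vset l : cuts l -> Ylay l @` Vset l = Yset M.
Proof.
move=> cl; apply/seteqP; split=> y.
  by case=> _ [z Zz <-] <-; exists z => //; rewrite -(Ylay_lay z cl).
case=> z Zz <-; exists (lay l z); first by exists z.
exact: Ylay_lay.
Qed.

Lemma Vset_restrict l E w : E \subset l -> Vset l w -> Vset E (restrict E w).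
Proof.
move=> El [z Zz <-]; exists z => //; apply: functional_extensionality_dep => k.
by rewrite /restrict; case: ifP => // kE; rewrite (fintype.subsetP El _ kE).
Qed.

(** Take the latents of [z'] on the latent ancestors of [E] and those of [z]
    elsewhere. *)
Lemma Vset_glue l E v w : E \subset l -> no_common_latent_ancestor E (l :\: E) ->
  Vset l v -> Vset E w -> Vset l (glue E v w).
Proof.
move=> El nc [z Zz <-] [z' Zz' <-].
pose P i := exists2 k, k \in E & ancestor (Lat i) (@End R M k).
exists (\row_i if `[< P i >] then z' ord0 i else z ord0 i).
  by move=> i; rewrite mxE; case: ifP => _; [exact: Zz' | exact: Zz].
apply: functional_extensionality_dep => k; rewrite /restrict /glue.
case: (boolP (k \in E)) => kE.
  rewrite (fintype.subsetP El _ kE); apply: state_latent_ancestors => i ik.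
  by rewrite mxE; case: asboolP => // -[]; exists k.
case: ifP => // kl; apply: state_latent_ancestors => i ik.
rewrite mxE; case: asboolP => // Pi; case: nc; exists i; split => //.
by exists k; rewrite // finset.in_setD kE kl.
Qed.

Lemma Tprime_Vset l E TE w :
  E \subset l -> no_common_latent_ancestor E (l :\: E) ->
  (forall u, Vset E u -> Vset E (TE u)) ->
  Vset l w -> Vset l (Tprime E TE w).
Proof.
move=> El nc TE_E lw.
exact/(Vset_glue El nc lw)/TE_E/(Vset_restrict El).
Qed.

Lemma restrict_continuous S (A : set (vals M)) :
  {within A, continuous (restrict S)}.
Proof.
apply: within_continuous_prod => k; apply: continuous_subspaceT => w.
rewrite /restrict /=; case: (k \in S); first exact: (@proj_continuous _ _ k w).
by apply: cvg_cst; exact: nbhs_pfilter.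
Qed.

Lemma Tprime_continuous E TE (A B : set (vals M)) :
  (forall w, A w -> B (restrict E w)) -> {within B, continuous TE} ->
  {within A, continuous (Tprime E TE)}.
Proof.
move=> AB TE_cont; apply: within_continuous_prod => k.
have proj_cont : continuous (fun u : vals M => u k) := @proj_continuous _ _ k.
rewrite /Tprime /glue /=; case: (k \in E); last exact: continuous_subspaceT proj_cont.
apply: (@continuous_within_comp _ _ _ A setT (TE \o restrict E) (fun u => u k)).
- by [].
- exact/(continuous_within_comp AB)/TE_cont/restrict_continuous.
- exact: continuous_subspaceT proj_cont.
Qed.

End CGMTheory.

Theorem proposition4 (R : realType) (M : CGM R) (l E : {set 'I_(N M)}) :
  embedded M ->
  layer l ->
  E \subset l ->
  no_common_latent_ancestor E (l :\: E) ->
  forall TE : vals M -> vals M,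
    endomorphism (Vset E) TE ->
  forall ginv : 'rV[R]_(dy M) -> vals M,
    (forall y, Yset M y -> Vset l (ginv y) /\ Ylay l (ginv y) = y) ->
    intrinsically_disentangled l E
      (fun y => Ylay l (Tprime E TE (ginv y))).
Proof.
move=> [_ emb] Ll El nc TE [TE_E TE_cont] ginv.
have Yemb := emb l Ll; have [_ Ylay_cont _] := Yemb.
rewrite /intrinsically_disentangled -(image_Ylay_Vset Ll.1) => ginvP.
have ginv_l y : (Ylay l @` Vset l) y -> Vset l (ginv y) by case/ginvP.
have Tprime_l := Tprime_Vset El nc TE_E.
split; first split.
- by move=> y /ginv_l /Tprime_l; exact: imageP.
- apply: (continuous_within_comp _ _ Ylay_cont) => [y /ginv_l /Tprime_l //|].
  apply: (continuous_within_comp (B := Vset l)) => //.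
    exact: embedding_on_section_continuous Yemb ginvP.
  by apply: Tprime_continuous TE_cont => w; exact: Vset_restrict.
- exists (Tprime E TE); split=> [w k kE|z Zz].
    by rewrite /Tprime /glue (negbTE kE).
  by rewrite (embedding_on_sectionK Yemb ginvP) //; exists z.
Qed.
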